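(* Let $\alpha\in(0,\pi/2]$ and let $I_1(\beta),I_2(\beta)$ be as defined in the context, for $\beta\in(\alpha,\pi)$. Then $(\cos\alpha-\cos\beta)^{1/2}I_1(\beta)$ is strictly decreasing and $(\cos\alpha-\cos\beta)^{1/2}I_2(\beta)$ is strictly increasing in $\beta$; $I_1>I_2$ for $\beta$ close to $\alpha$ and $I_1<I_2$ for $\beta$ close to $\pi$. Consequently there exists a unique $\beta^+\in(\alpha,\pi)$ with $I_1(\beta^+)=I_2(\beta^+)$.
   Context: For $\alpha\in(0,\pi/2]$ and $\beta\in(\alpha,\pi)$: $$I_1(\beta)=\int_0^\alpha\Big(\frac{\cos t-\cos\alpha}{\cos\alpha-\cos\beta}\Big)^{1/2}\frac{dt}{\cos t-\cos\beta},\qquad I_2(\beta)=\int_0^\alpha\Big(\frac{\cos\alpha-\cos\beta}{\cos t-\cos\alpha}\Big)^{1/2}\frac{dt}{\cos t-\cos\beta}.$$ *)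

From Stdlib Require Import Reals Lra.
Open Scope R_scope.

(* Improper Riemann integral at the right endpoint:
   f is Riemann integrable on [a,c] for every c in [a,b), and
   int_a^c f -> l as c -> b^-.  (Needed since the integrand of I_2 is
   unbounded near t = alpha.) *)
Definition improper_int_right (f : R -> R) (a b l : R) : Prop :=
  (forall c, a <= c < b -> exists _ : Riemann_integrable f a c, True) /\
  (forall eps, 0 < eps -> exists delta, 0 < delta /\
     forall c (pr : Riemann_integrable f a c),
       b - delta < c < b -> Rabs (RiemannInt pr - l) < eps).

Definition integrand1 (alpha beta t : R) : R :=
  sqrt ((cos t - cos alpha) / (cos alpha - cos beta)) / (cos t - cos beta).

Definition integrand2 (alpha beta t : R) : R :=
  sqrt ((cos alpha - cos beta) / (cos t - cos alpha)) / (cos t - cos beta).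

From Stdlib Require Import Reals Lra Psatz Classical ClassicalEpsilon Ranalysis5.
Open Scope R_scope.

(* Fix alpha, put c = cos alpha, b = cos beta in [-1, c) and
   p(t) = cos t - c, which is positive on [0, alpha) and vanishes linearly at
   t = alpha.  Then
     sqrt (c - b) * I1 = A(b) := int_0^alpha sqrt p / (cos t - b) dt,
     sqrt (c - b) * I2 = J - A(b),   J := int_0^alpha p^(-1/2) dt (improper),
   because p^(-1/2) - sqrt p / (cos t - b) = (c - b) / (sqrt p (cos t - b)).
   A is strictly increasing and locally Lipschitz in b, which gives the two
   monotonicity claims, and I1 - I2 has the sign of D(b) = 2 A(b) - J, which
   is increasing in b.  Near b = c, J - A(b) = O(sqrt (c - b)) by comparison
   with a model kernel integrated through atan, while A(b) >= A(-1) > 0, so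
   D > 0; at b = -1 the pointwise bound 2 sqrt p / (cos t + 1) + (1 - cos t)/2
   <= p^(-1/2) gives D(-1) <= -(alpha - sin alpha)/2 < 0.  Continuity and
   strict monotonicity of beta |-> D (cos beta) then give the unique crossing.
   The file develops, in order: a total Riemann integral [RI] and its calculus;
   improper integrals at the right endpoint (linearity, bounds, existence by
   monotone convergence); the model kernel; the functions A, J, D for a fixed
   alpha; and finally I1, I2 and the theorem. *)

(* Riemann integrals as a total function: [RI f a b] is the Riemann
   integral when [f] is integrable on [a,b] (and 0 otherwise), which
   frees the statements below from explicit integrability proofs. *)
Definition RI (f : R -> R) (a b : R) : R :=
  match excluded_middle_informative (exists pr : Riemann_integrable f a b, True) with
  | left H => RiemannInt (proj1_sig (constructive_indefinite_description _ H))
  | right _ => 0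
  end.

Lemma RI_eq f a b (pr : Riemann_integrable f a b) : RiemannInt pr = RI f a b.
Proof.
  unfold RI. destruct excluded_middle_informative as [H|H].
  - apply RiemannInt_P5.
  - exfalso; apply H; exists pr; exact I.
Qed.

Lemma integrable_ext f g a b : a <= b ->
  (forall t, a <= t <= b -> f t = g t) ->
  Riemann_integrable f a b -> Riemann_integrable g a b.
Proof.
  intros Hab Hfg pr eps. destruct (pr eps) as [phi [psi [H1 H2]]].
  exists phi, psi. split; [|exact H2].
  intros t Ht. rewrite <- Hfg; [apply H1; exact Ht|].
  rewrite Rmin_left in Ht by lra. rewrite Rmax_right in Ht by lra. lra.
Qed.

Lemma RI_ext f g a b : a <= b -> Riemann_integrable f a b ->
  (forall t, a <= t <= b -> f t = g t) -> RI f a b = RI g a b.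
Proof.
  intros Hab pr Hfg. pose proof (integrable_ext f g a b Hab Hfg pr) as pr'.
  rewrite <- (RI_eq _ _ _ pr), <- (RI_eq _ _ _ pr').
  apply RiemannInt_P18; auto. intros; apply Hfg; lra.
Qed.

Lemma RI_le f g a b : a <= b -> Riemann_integrable f a b -> Riemann_integrable g a b ->
  (forall t, a < t < b -> f t <= g t) -> RI f a b <= RI g a b.
Proof.
  intros Hab pr1 pr2 H. rewrite <- (RI_eq _ _ _ pr1), <- (RI_eq _ _ _ pr2).
  apply RiemannInt_P19; auto.
Qed.

Lemma integrable_lin f g l a b : Riemann_integrable f a b -> Riemann_integrable g a b ->
  Riemann_integrable (fun x => f x + l * g x) a b.
Proof. intros; apply RiemannInt_P10; auto. Qed.

Lemma RI_lin f g l a b : Riemann_integrable f a b -> Riemann_integrable g a b ->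
  RI (fun x => f x + l * g x) a b = RI f a b + l * RI g a b.
Proof.
  intros pr1 pr2. pose proof (RiemannInt_P10 l pr1 pr2) as pr3.
  rewrite <- (RI_eq _ _ _ pr1), <- (RI_eq _ _ _ pr2), <- (RI_eq _ _ _ pr3).
  apply RiemannInt_P13.
Qed.

Lemma integrable_const k a b : Riemann_integrable (fun _ => k) a b.
Proof. apply (RiemannInt_P14 a b k). Qed.

Lemma RI_const k a b : RI (fun _ => k) a b = k * (b - a).
Proof.
  rewrite <- (RI_eq _ _ _ (integrable_const k a b)).
  apply (RiemannInt_P15 (integrable_const k a b)).
Qed.

Lemma integrable_scal f l a b : a <= b -> Riemann_integrable f a b ->
  Riemann_integrable (fun x => l * f x) a b.
Proof.
  intros Hab pr. apply (integrable_ext (fun x => 0 + l * f x)); auto.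
  - intros; ring.
  - apply integrable_lin; auto; apply integrable_const.
Qed.

Lemma RI_scal f l a b : a <= b -> Riemann_integrable f a b ->
  RI (fun x => l * f x) a b = l * RI f a b.
Proof.
  intros Hab pr.
  rewrite <- (RI_ext (fun x => 0 + l * f x)); auto.
  - rewrite RI_lin; [rewrite RI_const; ring | apply integrable_const | exact pr].
  - apply integrable_lin; auto. apply integrable_const.
  - intros; ring.
Qed.

Lemma integrable_left f a b c : Riemann_integrable f a b -> a <= c <= b ->
  Riemann_integrable f a c.
Proof. intros; eapply RiemannInt_P22; eauto. Qed.

Lemma integrable_right f a b c : Riemann_integrable f a b -> a <= c <= b ->
  Riemann_integrable f c b.
Proof. intros; eapply RiemannInt_P23; eauto. Qed.

Lemma RI_chasles f a b c : Riemann_integrable f a c -> a <= b <= c ->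
  RI f a b + RI f b c = RI f a c.
Proof.
  intros pr H. pose proof (integrable_left _ _ _ _ pr H) as p1.
  pose proof (integrable_right _ _ _ _ pr H) as p2.
  rewrite <- (RI_eq _ _ _ p1), <- (RI_eq _ _ _ p2), <- (RI_eq _ _ _ pr).
  apply RiemannInt_P26.
Qed.

Lemma integrable_of_continuous f a b : a <= b ->
  (forall x, a <= x <= b -> continuity_pt f x) -> Riemann_integrable f a b.
Proof. intros; apply continuity_implies_RiemannInt; auto. Qed.

Lemma Rabs_le_inv x M : Rabs x <= M -> - M <= x <= M.
Proof. unfold Rabs; destruct Rcase_abs; lra. Qed.

Lemma RI_lower_bound f m a b : a <= b -> Riemann_integrable f a b ->
  (forall t, a < t < b -> m <= f t) -> m * (b - a) <= RI f a b.
Proof.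
  intros Hab pr H. rewrite <- RI_const.
  apply RI_le; auto. apply integrable_const.
Qed.

Lemma RI_upper_bound f M a b : a <= b -> Riemann_integrable f a b ->
  (forall t, a < t < b -> f t <= M) -> RI f a b <= M * (b - a).
Proof.
  intros Hab pr H. rewrite <- RI_const.
  apply RI_le; auto. apply integrable_const.
Qed.

Lemma RI_abs_bound f M a b : a <= b -> Riemann_integrable f a b ->
  (forall t, a < t < b -> Rabs (f t) <= M) -> Rabs (RI f a b) <= M * (b - a).
Proof.
  intros Hab pr H. apply Rabs_le. split.
  - replace (- (M * (b - a))) with (- M * (b - a)) by ring.
    apply RI_lower_bound; auto.
    intros t Ht; specialize (H t Ht); apply Rabs_le_inv in H; lra.
  - apply RI_upper_bound; auto.
    intros t Ht; specialize (H t Ht); apply Rabs_le_inv in H; lra.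
Qed.

Lemma RI_FTC f F a b : a <= b ->
  (forall x, a <= x <= b -> derivable_pt_lim F x (f x)) ->
  (forall x, a <= x <= b -> continuity_pt f x) ->
  RI f a b = F b - F a.
Proof.
  intros Hab HF Hc.
  pose proof (integrable_of_continuous f a b Hab Hc) as pr0.
  rewrite <- (RI_eq _ _ _ pr0), (RiemannInt_P20 Hab (FTC_P1 Hab Hc) pr0).
  set (P := primitive Hab (FTC_P1 Hab Hc)).
  set (G := fun x => P x - F x).
  assert (HG : forall x, a <= x <= b -> derivable_pt_lim G x 0).
  { intros x Hx. replace 0 with (f x - f x) by ring.
    apply derivable_pt_lim_minus; auto. apply RiemannInt_P28; auto. }
  assert (pr : forall x, a < x < b -> derivable_pt G x).
  { intros x Hx. exists 0. apply HG; lra. }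
  assert (Hb : G b = G a).
  { apply (null_derivative_loc G a b pr); [| |lra].
    - intros x Hx. apply derivable_continuous_pt. exists 0. apply HG; auto.
    - intros x Hx. apply derive_pt_eq_0. apply HG; lra. }
  unfold G in Hb. lra.
Qed.

Lemma continuity_pt_delta f x0 eps : continuity_pt f x0 -> 0 < eps ->
  exists delta, 0 < delta /\
    forall x, Rabs (x - x0) < delta -> Rabs (f x - f x0) < eps.
Proof.
  intros Hc Heps. destruct (Hc eps Heps) as [d [Hd H]].
  exists d. split; [lra|]. intros x Hx.
  destruct (Req_dec x x0) as [->|Hne].
  - rewrite Rminus_diag, Rabs_R0; lra.
  - apply (H x). split; [split; [exact I | auto] | exact Hx].
Qed.

Lemma lipschitz_continuity_pt f x0 r L : 0 < r -> 0 <= L ->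
  (forall x, Rabs (x - x0) < r -> Rabs (f x - f x0) <= L * Rabs (x - x0)) ->
  continuity_pt f x0.
Proof.
  intros Hr HL H eps Heps.
  exists (Rmin r (eps / (L + 1))). split.
  { apply Rmin_glb_lt; [lra | apply Rdiv_lt_0_compat; lra]. }
  intros x [_ Hx]. simpl in *. unfold R_dist in *.
  assert (Hx1 : Rabs (x - x0) < r) by (eapply Rlt_le_trans; [exact Hx | apply Rmin_l]).
  assert (Hx2 : Rabs (x - x0) < eps / (L + 1))
    by (eapply Rlt_le_trans; [exact Hx | apply Rmin_r]).
  assert (0 <= Rabs (x - x0)) by apply Rabs_pos.
  eapply Rle_lt_trans; [exact (H x Hx1)|].
  apply Rle_lt_trans with ((L + 1) * Rabs (x - x0)); [nra|].
  replace eps with ((L + 1) * (eps / (L + 1))) by (field; lra).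
  apply Rmult_lt_compat_l; lra.
Qed.

Lemma RI_pos f a b : a < b -> (forall x, a <= x <= b -> continuity_pt f x) ->
  (forall x, a <= x <= b -> 0 <= f x) -> 0 < f a -> 0 < RI f a b.
Proof.
  intros Hab Hc Hf Hfa.
  destruct (continuity_pt_delta f a (f a / 2) (Hc a ltac:(lra)) ltac:(lra))
    as [d [Hd Hnear]].
  set (a' := Rmin b (a + d / 2)).
  assert (Ha' : a < a' <= b /\ a' <= a + d / 2)
    by (unfold a', Rmin; destruct Rle_dec; lra).
  pose proof (integrable_of_continuous f a b ltac:(lra) Hc) as pr.
  rewrite <- (RI_chasles f a a' b pr) by lra.
  assert (Hleft : f a / 2 * (a' - a) <= RI f a a').
  { apply RI_lower_bound; [lra | apply (integrable_left _ _ b); auto; lra |].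
    intros x Hx. assert (Hx' : Rabs (x - a) < d) by (rewrite Rabs_right; lra).
    specialize (Hnear x Hx'). apply Rabs_def2 in Hnear. lra. }
  assert (Hright : 0 * (b - a') <= RI f a' b).
  { apply RI_lower_bound; [lra | apply (integrable_right _ a); auto; lra |].
    intros; apply Hf; lra. }
  nra.
Qed.

(* The limit clause of [improper_int_right], phrased with [RI] and with
   [delta <= b - a], so that every [c] it mentions lies in [a, b). *)
Lemma improper_RI f a b L : a < b -> improper_int_right f a b L ->
  forall eps, 0 < eps -> exists delta, 0 < delta <= b - a /\
    forall c, b - delta < c < b -> Rabs (RI f a c - L) < eps.
Proof.
  intros Hab [Hint Hlim] eps Heps. destruct (Hlim eps Heps) as [d [Hd H]].
  exists (Rmin d (b - a)). split; [split; [apply Rmin_glb_lt; lra | apply Rmin_r]|].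
  intros c Hc.
  assert (Hd1 := Rmin_l d (b - a)). assert (Hd2 := Rmin_r d (b - a)).
  destruct (Hint c ltac:(lra)) as [pr _]. rewrite <- (RI_eq _ _ _ pr). apply H. lra.
Qed.

Lemma improper_intro f a b L :
  (forall c, a <= c < b -> exists _ : Riemann_integrable f a c, True) ->
  (forall eps, 0 < eps -> exists delta, 0 < delta /\
     forall c, b - delta < c < b -> Rabs (RI f a c - L) < eps) ->
  improper_int_right f a b L.
Proof.
  intros Hint Hlim. split; auto.
  intros eps Heps. destruct (Hlim eps Heps) as [d [Hd H]].
  exists d. split; auto. intros c pr Hc. rewrite RI_eq. auto.
Qed.

Lemma improper_of_proper f M a b : a < b -> Riemann_integrable f a b ->
  (forall t, a <= t <= b -> Rabs (f t) <= M) -> improper_int_right f a b (RI f a b).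
Proof.
  intros Hab pr HM. apply improper_intro.
  - intros c Hc. exists (integrable_left f a b c pr ltac:(lra)). exact I.
  - intros eps Heps.
    assert (HM0 : 0 <= M) by (pose proof (Rabs_pos (f a)); specialize (HM a); lra).
    assert (Hq : 0 < eps / (M + 1)) by (apply Rdiv_lt_0_compat; lra).
    exists (Rmin (b - a) (eps / (M + 1))). split; [apply Rmin_glb_lt; lra|].
    intros c Hc.
    assert (Hd1 := Rmin_l (b - a) (eps / (M + 1))).
    assert (Hd2 := Rmin_r (b - a) (eps / (M + 1))).
    rewrite <- (RI_chasles f a c b pr) by lra.
    replace (RI f a c - (RI f a c + RI f c b)) with (- RI f c b) by ring.
    rewrite Rabs_Ropp.
    eapply Rle_lt_trans.
    { apply (RI_abs_bound f M c b); [lra | apply (integrable_right _ a); auto; lra |].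
      intros; apply HM; lra. }
    apply Rle_lt_trans with (M * (eps / (M + 1))); [apply Rmult_le_compat_l; lra|].
    replace eps with ((M + 1) * (eps / (M + 1))) at 2 by (field; lra).
    apply Rmult_lt_compat_r; lra.
Qed.

Lemma improper_lin f g l1 l2 a b L1 L2 : a < b ->
  improper_int_right f a b L1 -> improper_int_right g a b L2 ->
  improper_int_right (fun x => l1 * f x + l2 * g x) a b (l1 * L1 + l2 * L2).
Proof.
  intros Hab Hf Hg.
  pose proof (improper_RI f a b L1 Hab Hf) as Hf'.
  pose proof (improper_RI g a b L2 Hab Hg) as Hg'.
  destruct Hf as [Fint _], Hg as [Gint _].
  assert (Hint : forall c, a <= c < b ->
     exists _ : Riemann_integrable (fun x => l1 * f x + l2 * g x) a c, True).
  { intros c Hc. destruct (Fint c Hc) as [p1 _], (Gint c Hc) as [p2 _].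
    exists (integrable_lin _ _ l2 _ _ (integrable_scal f l1 a c ltac:(lra) p1) p2).
    exact I. }
  apply improper_intro; auto.
  intros eps Heps.
  assert (Hk1 : 0 < Rabs l1 + 1) by (pose proof (Rabs_pos l1); lra).
  assert (Hk2 : 0 < Rabs l2 + 1) by (pose proof (Rabs_pos l2); lra).
  destruct (Hf' (eps / 2 / (Rabs l1 + 1))) as [d1 [Hd1 H1]];
    [apply Rdiv_lt_0_compat; lra|].
  destruct (Hg' (eps / 2 / (Rabs l2 + 1))) as [d2 [Hd2 H2]];
    [apply Rdiv_lt_0_compat; lra|].
  exists (Rmin d1 d2). split; [apply Rmin_glb_lt; lra|]. intros c Hc.
  assert (Hm1 := Rmin_l d1 d2). assert (Hm2 := Rmin_r d1 d2).
  destruct (Fint c ltac:(lra)) as [p1 _], (Gint c ltac:(lra)) as [p2 _].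
  rewrite (RI_lin (fun x => l1 * f x) g l2 a c), RI_scal;
    try apply integrable_scal; auto; try lra.
  specialize (H1 c ltac:(lra)). specialize (H2 c ltac:(lra)).
  assert (Hhalf : forall l d, Rabs d < eps / 2 / (Rabs l + 1) -> Rabs (l * d) < eps / 2).
  { intros l d Hd. assert (Hl : 0 < Rabs l + 1) by (pose proof (Rabs_pos l); lra).
    rewrite Rabs_mult. pose proof (Rabs_pos d). pose proof (Rabs_pos l).
    apply Rle_lt_trans with ((Rabs l + 1) * Rabs d); [nra|].
    replace (eps / 2) with ((Rabs l + 1) * (eps / 2 / (Rabs l + 1))) by (field; lra).
    apply Rmult_lt_compat_l; lra. }
  replace (l1 * RI f a c + l2 * RI g a c - (l1 * L1 + l2 * L2))
    with (l1 * (RI f a c - L1) + l2 * (RI g a c - L2)) by ring.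
  eapply Rle_lt_trans; [apply Rabs_triang|].
  pose proof (Hhalf l1 _ H1). pose proof (Hhalf l2 _ H2). lra.
Qed.

Lemma improper_ext f g a b L : a < b -> improper_int_right f a b L ->
  (forall t, a <= t < b -> f t = g t) -> improper_int_right g a b L.
Proof.
  intros Hab Hf Hfg. pose proof (improper_RI f a b L Hab Hf) as Hf'.
  destruct Hf as [Fint _].
  apply improper_intro.
  - intros c Hc. destruct (Fint c Hc) as [p _].
    exists (integrable_ext f g a c ltac:(lra) ltac:(intros; apply Hfg; lra) p). exact I.
  - intros eps Heps. destruct (Hf' eps Heps) as [d [Hd H]]. exists d. split; [lra|].
    intros c Hc. destruct (Fint c ltac:(lra)) as [p _].
    rewrite <- (RI_ext f g); auto; [lra | intros; apply Hfg; lra].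
Qed.

Lemma improper_scal f l a b L : a < b -> improper_int_right f a b L ->
  improper_int_right (fun x => l * f x) a b (l * L).
Proof.
  intros Hab Hf.
  pose proof (improper_lin f f l 0 a b L L Hab Hf Hf) as H.
  replace (l * L) with (l * L + 0 * L) by ring.
  apply (improper_ext _ _ _ _ _ Hab H). intros; ring.
Qed.

Lemma improper_le_of_partial f a b L M : a < b -> improper_int_right f a b L ->
  (forall c, a <= c < b -> RI f a c <= M) -> L <= M.
Proof.
  intros Hab Hf HM. destruct (Rle_lt_dec L M) as [|Hlt]; auto.
  destruct (improper_RI f a b L Hab Hf (L - M)) as [d [Hd Hc]]; [lra|].
  specialize (Hc (b - d / 2) ltac:(lra)). specialize (HM (b - d / 2) ltac:(lra)).
  apply Rabs_def2 in Hc. lra.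
Qed.

Lemma improper_ge_of_partial f a b L M : a < b -> improper_int_right f a b L ->
  (forall c, a <= c < b -> M <= RI f a c) -> M <= L.
Proof.
  intros Hab Hf HM. destruct (Rle_lt_dec M L) as [|Hlt]; auto.
  destruct (improper_RI f a b L Hab Hf (M - L)) as [d [Hd Hc]]; [lra|].
  specialize (Hc (b - d / 2) ltac:(lra)). specialize (HM (b - d / 2) ltac:(lra)).
  apply Rabs_def2 in Hc. lra.
Qed.

(* Monotone convergence for improper integrals: a nonnegative function
   whose partial integrals are bounded has an improper integral (their
   supremum). *)
Lemma improper_exists f a b M : a < b ->
  (forall c, a <= c < b -> exists _ : Riemann_integrable f a c, True) ->
  (forall t, a <= t < b -> 0 <= f t) ->
  (forall c, a <= c < b -> RI f a c <= M) -> exists L, improper_int_right f a b L.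
Proof.
  intros Hab Hint Hf HM.
  assert (Hmono : forall c0 c, a <= c0 <= c -> c < b -> RI f a c0 <= RI f a c).
  { intros c0 c Hc0 Hc. destruct (Hint c ltac:(lra)) as [pr _].
    rewrite <- (RI_chasles f a c0 c pr Hc0).
    assert (0 * (c - c0) <= RI f c0 c); [|lra].
    apply RI_lower_bound; [lra | apply (integrable_right _ a); auto |].
    intros; apply Hf; lra. }
  set (E := fun y => exists c, a <= c < b /\ y = RI f a c).
  assert (Hb : bound E) by (exists M; intros y [c [Hc ->]]; auto).
  assert (He : exists y, E y) by (exists (RI f a a), a; split; [lra|auto]).
  destruct (completeness E Hb He) as [L [HL1 HL2]].
  exists L. apply improper_intro; auto.
  intros eps Heps.
  assert (Happrox : exists c0, a <= c0 < b /\ L - eps < RI f a c0).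
  { apply NNPP. intro Hn. assert (L <= L - eps); [|lra].
    apply HL2. intros y [c [Hc ->]]. apply Rnot_lt_le. intro. apply Hn. exists c; auto. }
  destruct Happrox as [c0 [Hc0 Hlt]].
  exists (b - c0). split; [lra|]. intros c Hc.
  assert (RI f a c0 <= RI f a c) by (apply Hmono; lra).
  assert (RI f a c <= L) by (apply HL1; exists c; split; [lra|auto]).
  apply Rabs_def1; lra.
Qed.

Lemma improper_nonneg f a b L : a < b -> improper_int_right f a b L ->
  (forall t, a <= t < b -> 0 <= f t) -> 0 <= L.
Proof.
  intros Hab Hf Hpos. pose proof Hf as [Fint _].
  apply (improper_ge_of_partial f a b L 0 Hab Hf). intros c Hc.
  destruct (Fint c Hc) as [pr _].
  replace 0 with (0 * (c - a)) by ring.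
  apply RI_lower_bound; [lra | exact pr | intros; apply Hpos; lra].
Qed.



(* Pointwise continuity of the elementary expressions occurring in the
   integrands, stated on eta-expanded functions so that [apply] matches. *)
Lemma cont_const k x : continuity_pt (fun _ => k) x.
Proof. apply continuity_pt_const. intros a b; reflexivity. Qed.
Lemma cont_cos x : continuity_pt cos x.
Proof. apply continuity_cos. Qed.
Lemma cont_minus f g x : continuity_pt f x -> continuity_pt g x ->
  continuity_pt (fun t => f t - g t) x.
Proof. intros; apply (continuity_pt_minus f g); auto. Qed.
Lemma cont_plus f g x : continuity_pt f x -> continuity_pt g x ->
  continuity_pt (fun t => f t + g t) x.
Proof. intros; apply (continuity_pt_plus f g); auto. Qed.
Lemma cont_id x : continuity_pt (fun t => t) x.
Proof. apply derivable_continuous_pt, derivable_pt_id. Qed.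
Lemma cont_mult f g x : continuity_pt f x -> continuity_pt g x ->
  continuity_pt (fun t => f t * g t) x.
Proof. intros; apply (continuity_pt_mult f g); auto. Qed.
Lemma cont_div f g x : continuity_pt f x -> continuity_pt g x -> g x <> 0 ->
  continuity_pt (fun t => f t / g t) x.
Proof. intros; apply (continuity_pt_div f g); auto. Qed.
Lemma cont_inv f x : continuity_pt f x -> f x <> 0 -> continuity_pt (fun t => / f t) x.
Proof. intros; apply (continuity_pt_inv f); auto. Qed.
Lemma cont_sqrt f x : continuity_pt f x -> 0 <= f x ->
  continuity_pt (fun t => sqrt (f t)) x.
Proof.
  intros. change (continuity_pt (comp sqrt f) x). apply continuity_pt_comp; auto.
  apply continuity_pt_sqrt; auto.
Qed.

Ltac continuity_tac :=
  repeat first [ apply cont_div | apply cont_mult | apply cont_minus | apply cont_plus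
               | apply cont_inv | apply cont_sqrt | apply cont_cos | apply cont_const
               | apply cont_id ].

(* The model integrand [e / (sqrt u * (u + e))] with [u = K (a - t)]; it
   dominates the integrands below near the singular endpoint [a], and it
   has the explicit primitive [-(2 sqrt e / K) atan (sqrt u / sqrt e)]. *)
Definition model_kernel (a K e t : R) : R :=
  e / (sqrt (K * (a - t)) * (K * (a - t) + e)).

Definition model_primitive (a K e t : R) : R :=
  - (2 * sqrt e / K) * atan (/ sqrt e * sqrt (K * (a - t))).

Lemma model_primitive_derivative a K e t : 0 < K -> 0 < e -> t < a ->
  derivable_pt_lim (model_primitive a K e) t (model_kernel a K e t).
Proof.
  intros HK He Ht.
  assert (Hu : 0 < K * (a - t)) by nra.
  assert (Hse : 0 < sqrt e) by (apply sqrt_lt_R0; auto).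
  assert (Hsu : 0 < sqrt (K * (a - t))) by (apply sqrt_lt_R0; auto).
  assert (Hee : sqrt e * sqrt e = e) by (apply sqrt_sqrt; lra).
  assert (Huu : sqrt (K * (a - t)) * sqrt (K * (a - t)) = K * (a - t))
    by (apply sqrt_sqrt; lra).
  change (derivable_pt_lim (mult_real_fct (- (2 * sqrt e / K))
     (comp atan (mult_real_fct (/ sqrt e)
        (comp sqrt (mult_real_fct K (fun x => a - x)))))) t (model_kernel a K e t)).
  replace (model_kernel a K e t) with
    (- (2 * sqrt e / K) * ((/ (1 + (/ sqrt e * sqrt (K * (a - t))) ^ 2)) *
       (/ sqrt e * (/ (2 * sqrt (K * (a - t))) * (K * (0 - 1)))))).
  2:{ unfold model_kernel. set (se := sqrt e) in *. set (su := sqrt (K * (a - t))) in *.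
      rewrite <- Hee, <- Huu. field. repeat split; nra. }
  apply derivable_pt_lim_scal, derivable_pt_lim_comp.
  - apply derivable_pt_lim_scal, derivable_pt_lim_comp.
    + apply derivable_pt_lim_scal, derivable_pt_lim_minus;
        [apply derivable_pt_lim_const | apply derivable_pt_lim_id].
    + apply derivable_pt_lim_sqrt. unfold mult_real_fct; lra.
  - apply derivable_pt_lim_atan.
Qed.

Lemma model_kernel_continuous a K e t : 0 < K -> 0 < e -> t < a ->
  continuity_pt (model_kernel a K e) t.
Proof.
  intros HK He Ht. assert (Hu : 0 < K * (a - t)) by nra.
  assert (0 < sqrt (K * (a - t))) by (apply sqrt_lt_R0; auto).
  unfold model_kernel. continuity_tac; nra.
Qed.

Lemma model_kernel_integral_bound a K e x0 c : 0 < K -> 0 < e -> x0 <= c < a ->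
  RI (model_kernel a K e) x0 c <= 2 * sqrt e / K * PI.
Proof.
  intros HK He Hc.
  rewrite (RI_FTC _ (model_primitive a K e)); try lra.
  2:{ intros; apply model_primitive_derivative; auto; lra. }
  2:{ intros; apply model_kernel_continuous; auto; lra. }
  unfold model_primitive.
  assert (Hse : 0 < sqrt e) by (apply sqrt_lt_R0; auto).
  assert (0 < 2 * sqrt e / K) by (apply Rdiv_lt_0_compat; lra).
  destruct (atan_bound (/ sqrt e * sqrt (K * (a - c)))).
  destruct (atan_bound (/ sqrt e * sqrt (K * (a - x0)))).
  nra.
Qed.

(* sin u >= u / 2 on [0, 1], from the alternating Taylor lower bound. *)
Lemma sin_ge_half u : 0 <= u <= 1 -> u / 2 <= sin u.
Proof.
  intros [H0 H1]. assert (HP := PI2_1).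
  destruct (SIN u H0 ltac:(lra)) as [Hlb _].
  eapply Rle_trans; [|exact Hlb].
  unfold sin_lb, sin_approx, sin_term. simpl.
  (* u - u^3/6 + u^5/120 - u^7/5040 >= u/2, using u^3 <= u and u^7 <= u^5 *)
  assert (u * (u * (u * 1)) <= u) by nra.
  assert (0 <= u * (u * (u * (u * (u * 1))))) by (repeat (apply Rmult_le_pos; try lra)).
  assert (u * (u * (u * (u * (u * (u * (u * 1)))))) <= u * (u * (u * (u * (u * 1))))).
  { replace (u * (u * (u * (u * (u * (u * (u * 1)))))))
      with ((u * u) * (u * (u * (u * (u * (u * 1)))))) by ring.
    assert (u * u <= 1) by nra. nra. }
  lra.
Qed.

Lemma integral_one_minus_cos u : 0 <= u ->
  RI (fun t => (1 - cos t) / 2) 0 u = (u - sin u) / 2.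
Proof.
  intros Hu. rewrite (RI_FTC _ (fun t => / 2 * (t - sin t))); [rewrite sin_0; field | lra | |].
  - intros x _. replace ((1 - cos x) / 2) with (/ 2 * (1 - cos x)) by field.
    change (derivable_pt_lim (mult_real_fct (/ 2) (fun t => t - sin t)) x
              (/ 2 * (1 - cos x))).
    apply derivable_pt_lim_scal, derivable_pt_lim_minus;
      [apply derivable_pt_lim_id | apply derivable_pt_lim_sin].
  - intros; continuity_tac; lra.
Qed.

Section Fixed_angle.

Variable al : R.
Hypothesis Hal : 0 < al <= PI / 2.

Lemma cos_alpha_range : 0 <= cos al < 1.
Proof.
  assert (HP := PI2_1). split; [apply cos_ge_0; lra|].
  rewrite <- cos_0. apply cos_decreasing_1; lra.
Qed.

Lemma cos_range t : 0 <= t <= al -> cos al <= cos t <= 1.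
Proof.
  intros Ht. assert (HP := PI2_1). split; [|apply COS_bound].
  destruct (Req_dec t al) as [->|]; [lra|].
  left; apply cos_decreasing_1; lra.
Qed.

Lemma cos_gt_alpha t : 0 <= t < al -> cos al < cos t.
Proof. intros Ht. assert (HP := PI2_1). apply cos_decreasing_1; lra. Qed.

Lemma cos_lt_alpha be : al < be <= PI -> -1 <= cos be < cos al.
Proof.
  intros Hb. assert (HP := PI2_1).
  split; [apply COS_bound | apply cos_decreasing_1; lra].
Qed.

(* Slope of a linear lower bound for the gap [cos t - cos al]. *)
Let K := sin (al / 2) / 2.

Lemma K_pos : 0 < K.
Proof.
  unfold K. assert (HP := PI2_1).
  assert (0 < sin (al / 2)) by (apply sin_gt_0; lra). lra.
Qed.

(* The gap vanishes linearly at t = al: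
   cos t - cos al = 2 sin ((al+t)/2) sin ((al-t)/2) >= K (al - t). *)
Lemma gap_lower t : 0 <= t <= al -> K * (al - t) <= cos t - cos al.
Proof.
  intros Ht. assert (HP := PI2_1). assert (HP4 := PI_4). unfold K.
  rewrite form2. replace ((t - al) / 2) with (- ((al - t) / 2)) by field.
  rewrite sin_neg.
  assert (H1 : (al - t) / 2 / 2 <= sin ((al - t) / 2)) by (apply sin_ge_half; lra).
  assert (H2 : sin (al / 2) <= sin ((t + al) / 2)).
  { destruct (Req_dec t 0) as [->|]; [right; f_equal; field|].
    left; apply sin_increasing_1; lra. }
  assert (H3 : 0 <= sin (al / 2)) by (apply sin_ge_0; lra).
  nra.
Qed.

(* Integrands: [kernel b] gives A(b) = sqrt (cos al - b) * I1 for b = cos beta,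
   and [inv_sqrt_gap] gives J, the improper integral of (cos t - cos al)^(-1/2);
   we will see that sqrt (cos al - b) * I2 = J - A(b). *)
Definition kernel (b t : R) : R := sqrt (cos t - cos al) / (cos t - b).
Definition A (b : R) : R := RI (kernel b) 0 al.
Definition inv_sqrt_gap (t : R) : R := / sqrt (cos t - cos al).

Lemma kernel_continuous b t : b < cos al -> 0 <= t <= al -> continuity_pt (kernel b) t.
Proof. intros Hb Ht. destruct (cos_range t Ht). unfold kernel. continuity_tac; lra. Qed.

Lemma kernel_integrable b : b < cos al -> Riemann_integrable (kernel b) 0 al.
Proof.
  intros Hb. apply integrable_of_continuous; [lra|]. intros; apply kernel_continuous; auto.
Qed.

Lemma sqrt_gap_le_1 t : 0 <= t <= al -> 0 <= sqrt (cos t - cos al) <= 1.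
Proof.
  intros Ht. destruct (cos_range t Ht). split; [apply sqrt_pos|].
  rewrite <- sqrt_1. apply sqrt_le_1_alt. pose proof cos_alpha_range. lra.
Qed.

Lemma kernel_bound b t : b < cos al -> 0 <= t <= al ->
  0 <= kernel b t <= / (cos al - b).
Proof.
  intros Hb Ht. destruct (cos_range t Ht). destruct (sqrt_gap_le_1 t Ht).
  unfold kernel, Rdiv. split.
  - apply Rmult_le_pos; [lra|]. left; apply Rinv_0_lt_compat; lra.
  - rewrite <- (Rmult_1_l (/ (cos al - b))). apply Rmult_le_compat; try lra.
    { left; apply Rinv_0_lt_compat; lra. }
    apply Rinv_le_contravar; lra.
Qed.

Lemma inv_sqrt_gap_sub_kernel b t : b < cos al -> 0 <= t < al ->
  inv_sqrt_gap t - kernel b t =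
  (cos al - b) / (sqrt (cos t - cos al) * ((cos t - cos al) + (cos al - b))).
Proof.
  intros Hb Ht. assert (Hp := cos_gt_alpha t Ht).
  assert (Hs : 0 < sqrt (cos t - cos al)) by (apply sqrt_lt_R0; lra).
  assert (Hss := sqrt_sqrt (cos t - cos al) ltac:(lra)).
  unfold inv_sqrt_gap, kernel.
  replace (cos t - cos al + (cos al - b)) with (cos t - b) by ring.
  replace (cos al - b) with ((cos t - b) - sqrt (cos t - cos al) * sqrt (cos t - cos al))
    by lra.
  field. lra.
Qed.

(* Domination of e / (sqrt p (p + e)) by the model kernel, using p >= K (al - t). *)
Lemma gap_kernel_le_model e t : 0 < e -> 0 <= t < al ->
  e / (sqrt (cos t - cos al) * ((cos t - cos al) + e)) <= model_kernel al K e t.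
Proof.
  intros He Ht. assert (HK := K_pos).
  assert (Hlow := gap_lower t ltac:(lra)).
  assert (Hu : 0 < K * (al - t)) by nra.
  assert (Hs1 : sqrt (K * (al - t)) <= sqrt (cos t - cos al)) by (apply sqrt_le_1_alt; lra).
  assert (Hs2 : 0 < sqrt (K * (al - t))) by (apply sqrt_lt_R0; lra).
  unfold model_kernel, Rdiv. apply Rmult_le_compat_l; [lra|].
  apply Rinv_le_contravar; [apply Rmult_lt_0_compat; lra|].
  apply Rmult_le_compat; lra.
Qed.

Lemma inv_sqrt_gap_integrable c : 0 <= c < al -> Riemann_integrable inv_sqrt_gap 0 c.
Proof.
  intros Hc. apply integrable_of_continuous; [lra|]. intros t Ht.
  assert (Hp := cos_gt_alpha t ltac:(lra)).
  assert (0 < sqrt (cos t - cos al)) by (apply sqrt_lt_R0; lra).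
  unfold inv_sqrt_gap. continuity_tac; lra.
Qed.

(* inv_sqrt_gap <= 2 / (sqrt p (p + 1)) because p = cos t - cos al <= 1. *)
Lemma inv_sqrt_gap_le t : 0 <= t < al ->
  inv_sqrt_gap t <= 2 * (1 / (sqrt (cos t - cos al) * (cos t - cos al + 1))).
Proof.
  intros Ht. assert (Hp := cos_gt_alpha t Ht). destruct (cos_range t ltac:(lra)).
  pose proof cos_alpha_range.
  assert (Hs : 0 < sqrt (cos t - cos al)) by (apply sqrt_lt_R0; lra).
  unfold inv_sqrt_gap.
  replace (2 * (1 / (sqrt (cos t - cos al) * (cos t - cos al + 1)))) with
    (/ sqrt (cos t - cos al) * (2 / (cos t - cos al + 1))) by (field; lra).
  rewrite <- (Rmult_1_r (/ sqrt (cos t - cos al))) at 1.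
  apply Rmult_le_compat_l; [left; apply Rinv_0_lt_compat; lra|].
  apply (Rmult_le_reg_r (cos t - cos al + 1)); [lra|].
  unfold Rdiv. rewrite Rmult_assoc, Rinv_l; lra.
Qed.

(* J exists: inv_sqrt_gap is nonnegative and dominated by twice the model
   kernel with e = 1, whose partial integrals are bounded. *)
Lemma J_exists : exists J, improper_int_right inv_sqrt_gap 0 al J.
Proof.
  assert (HK := K_pos).
  apply (improper_exists _ 0 al (2 * (2 * sqrt 1 / K * PI))); [lra | | |].
  - intros c Hc. exists (inv_sqrt_gap_integrable c Hc). exact I.
  - intros t Ht. assert (Hp := cos_gt_alpha t Ht).
    left; apply Rinv_0_lt_compat, sqrt_lt_R0; lra.
  - intros c Hc.
    assert (Hmodel : Riemann_integrable (model_kernel al K 1) 0 c).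
    { apply integrable_of_continuous; [lra|].
      intros; apply model_kernel_continuous; lra. }
    apply Rle_trans with (RI (fun t => 2 * model_kernel al K 1 t) 0 c).
    + apply RI_le; [lra | apply inv_sqrt_gap_integrable; auto
                   | apply integrable_scal; auto; lra |].
      intros t Ht. assert (Hle := inv_sqrt_gap_le t ltac:(lra)).
      assert (Hm := gap_kernel_le_model 1 t ltac:(lra) ltac:(lra)). lra.
    + rewrite RI_scal; [|lra|auto]. apply Rmult_le_compat_l; [lra|].
      apply model_kernel_integral_bound; lra.
Qed.

Definition kernel_diff (b1 b2 t : R) : R :=
  sqrt (cos t - cos al) * (b1 - b2) / ((cos t - b1) * (cos t - b2)).

Lemma A_sub b1 b2 : b1 < cos al -> b2 < cos al ->
  A b1 - A b2 = RI (kernel_diff b1 b2) 0 al.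
Proof.
  intros H1 H2. unfold A.
  replace (RI (kernel b1) 0 al - RI (kernel b2) 0 al) with
    (RI (kernel b1) 0 al + (-1) * RI (kernel b2) 0 al) by ring.
  rewrite <- RI_lin by (apply kernel_integrable; auto).
  apply RI_ext; [lra | apply integrable_lin; apply kernel_integrable; auto |].
  intros t Ht. destruct (cos_range t Ht). unfold kernel, kernel_diff. field. lra.
Qed.

Lemma A_increasing b2 b1 : b2 < b1 -> b1 < cos al -> A b2 < A b1.
Proof.
  intros H21 H1. pose proof cos_alpha_range.
  assert (Hsub := A_sub b1 b2 H1 ltac:(lra)).
  assert (0 < RI (kernel_diff b1 b2) 0 al); [|lra].
  apply RI_pos; [lra | | |].
  - intros t Ht. destruct (cos_range t Ht). unfold kernel_diff. continuity_tac; nra.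
  - intros t Ht. destruct (cos_range t Ht). unfold kernel_diff.
    apply Rmult_le_pos; [apply Rmult_le_pos; [apply sqrt_pos | lra]|].
    left; apply Rinv_0_lt_compat; nra.
  - unfold kernel_diff. rewrite cos_0.
    apply Rmult_lt_0_compat; [apply Rmult_lt_0_compat; [apply sqrt_lt_R0|]; lra|].
    apply Rinv_0_lt_compat; nra.
Qed.

Lemma A_pos b : b < cos al -> 0 < A b.
Proof.
  intros Hb. pose proof cos_alpha_range. apply RI_pos; [lra | | |].
  - intros; apply kernel_continuous; auto.
  - intros; apply kernel_bound; auto.
  - unfold kernel. rewrite cos_0. apply Rdiv_lt_0_compat; [apply sqrt_lt_R0|]; lra.
Qed.

Lemma A_lipschitz b0 b : b0 < cos al -> Rabs (b - b0) <= (cos al - b0) / 2 ->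
  Rabs (A b - A b0) <= 2 * al / ((cos al - b0) * (cos al - b0)) * Rabs (b - b0).
Proof.
  intros Hb0 Hb. apply Rabs_le_inv in Hb as Hb'.
  assert (Hb1 : b < cos al) by lra.
  rewrite A_sub by auto.
  set (M := 2 * Rabs (b - b0) / ((cos al - b0) * (cos al - b0))).
  replace (2 * al / ((cos al - b0) * (cos al - b0)) * Rabs (b - b0)) with (M * (al - 0))
    by (unfold M; field; lra).
  apply RI_abs_bound; [lra | apply integrable_of_continuous; [lra|] |].
  - intros t Ht. destruct (cos_range t Ht). unfold kernel_diff. continuity_tac; nra.
  - intros t Ht. destruct (cos_range t ltac:(lra)). destruct (sqrt_gap_le_1 t ltac:(lra)).
    assert (Hden : (cos al - b0) * (cos al - b0) / 2 <= (cos t - b) * (cos t - b0)) by nra.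
    unfold kernel_diff, M, Rdiv. rewrite !Rabs_mult, Rabs_inv.
    rewrite (Rabs_right (sqrt _)), (Rabs_right ((cos t - b) * (cos t - b0))) by nra.
    assert (Hinv : / ((cos t - b) * (cos t - b0)) <=
                   2 * / ((cos al - b0) * (cos al - b0))).
    { replace (2 * / ((cos al - b0) * (cos al - b0))) with
        (/ ((cos al - b0) * (cos al - b0) / 2)) by (field; lra).
      apply Rinv_le_contravar; nra. }
    assert (0 <= Rabs (b - b0)) by apply Rabs_pos.
    assert (0 <= / ((cos t - b) * (cos t - b0))) by (left; apply Rinv_0_lt_compat; nra).
    apply Rle_trans with (1 * Rabs (b - b0) * / ((cos t - b) * (cos t - b0))).
    + apply Rmult_le_compat_r; auto. apply Rmult_le_compat_r; lra.
    + nra.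
Qed.

Lemma A_continuous b0 : b0 < cos al -> continuity_pt A b0.
Proof.
  intros Hb0.
  apply (lipschitz_continuity_pt A b0 ((cos al - b0) / 2)
           (2 * al / ((cos al - b0) * (cos al - b0)))); [lra | |].
  - apply Rmult_le_pos; [lra|]. left; apply Rinv_0_lt_compat; nra.
  - intros b Hb. apply A_lipschitz; lra.
Qed.

Lemma kernel_improper b : b < cos al -> improper_int_right (kernel b) 0 al (A b).
Proof.
  intros Hb. apply (improper_of_proper _ (/ (cos al - b))); [lra | apply kernel_integrable; auto |].
  intros t Ht. destruct (kernel_bound b t Hb Ht). rewrite Rabs_right; lra.
Qed.

Lemma A_cos_decreasing be1 be2 : al < be1 < be2 -> be2 <= PI -> A (cos be2) < A (cos be1).
Proof.
  intros H12 H2. assert (HP := PI2_1). destruct (cos_lt_alpha be1 ltac:(lra)).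
  apply A_increasing; [apply cos_decreasing_1; lra | auto].
Qed.

Section Given_J.

Variable J : R.
Hypothesis HJ : improper_int_right inv_sqrt_gap 0 al J.

(* D (cos beta) = sqrt (cos al - cos beta) * (I1 - I2): the sign of D decides
   which of I1, I2 is larger. *)
Definition D (b : R) : R := 2 * A b - J.

(* J - A(b) = sqrt (cos al - b) * I2 is the improper integral of inv_sqrt_gap - kernel b. *)
Lemma tail_improper b : b < cos al ->
  improper_int_right (fun t => inv_sqrt_gap t - kernel b t) 0 al (J - A b).
Proof.
  intros Hb. assert (Hal0 : 0 < al) by lra.
  pose proof (improper_lin _ _ 1 (-1) 0 al J (A b) Hal0 HJ (kernel_improper b Hb)) as H.
  replace (J - A b) with (1 * J + -1 * A b) by ring.
  apply (improper_ext _ _ _ _ _ Hal0 H). intros; ring.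
Qed.

Lemma tail_bound b : b < cos al -> J - A b <= 2 * PI / K * sqrt (cos al - b).
Proof.
  intros Hb. assert (HK := K_pos). pose proof (tail_improper b Hb) as Htail.
  replace (2 * PI / K * sqrt (cos al - b)) with (2 * sqrt (cos al - b) / K * PI)
    by (field; lra).
  apply (improper_le_of_partial _ 0 al _ _ ltac:(lra) Htail). intros c Hc.
  destruct Htail as [Hint _]. destruct (Hint c Hc) as [pr _].
  apply Rle_trans with (RI (model_kernel al K (cos al - b)) 0 c).
  - apply RI_le; [lra | exact pr | |].
    + apply integrable_of_continuous; [lra|]. intros; apply model_kernel_continuous; lra.
    + intros t Ht. rewrite inv_sqrt_gap_sub_kernel by (auto; lra).
      apply gap_kernel_le_model; lra.
  - apply model_kernel_integral_bound; lra.
Qed.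

(* D > 0 near cos al: A(b) >= A(-1) > 0 while the tail J - A(b) tends to 0. *)
Lemma D_pos_near_cos_alpha : exists e0, 0 < e0 /\
  forall b, cos al - e0 < b < cos al -> 0 < D b.
Proof.
  assert (HK := K_pos). pose proof cos_alpha_range. assert (HP := PI2_1).
  set (C := 2 * PI / K). assert (HC : 0 < C) by (unfold C; apply Rdiv_lt_0_compat; lra).
  assert (Ha0 := A_pos (-1) ltac:(lra)).
  set (X := A (-1) / (2 * C)). assert (HX : 0 < X) by (unfold X; apply Rdiv_lt_0_compat; lra).
  exists (Rmin (cos al + 1) (X * X)). split; [apply Rmin_glb_lt; nra|].
  intros b Hb.
  assert (Hm1 := Rmin_l (cos al + 1) (X * X)). assert (Hm2 := Rmin_r (cos al + 1) (X * X)).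
  assert (Hmono := A_increasing (-1) b ltac:(lra) ltac:(lra)).
  assert (Htail := tail_bound b ltac:(lra)). fold C in Htail.
  assert (Hs : sqrt (cos al - b) <= X).
  { rewrite <- (sqrt_square X) by lra. apply sqrt_le_1_alt. lra. }
  assert (HCX : C * X = A (-1) / 2) by (unfold X; field; lra).
  assert (C * sqrt (cos al - b) <= C * X) by (apply Rmult_le_compat_l; lra).
  unfold D. lra.
Qed.

(* Pointwise 2 kernel(-1) + (1 - cos t)/2 <= inv_sqrt_gap, so that J exceeds
   2 A(-1) by at least the integral of (1 - cos t)/2. *)
Lemma kernel_minus_one_le t : 0 <= t < al ->
  2 * kernel (-1) t + (1 - cos t) / 2 <= inv_sqrt_gap t.
Proof.
  intros Ht. assert (Hp := cos_gt_alpha t Ht). destruct (cos_range t ltac:(lra)).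
  destruct (sqrt_gap_le_1 t ltac:(lra)). pose proof cos_alpha_range.
  assert (Hs : 0 < sqrt (cos t - cos al)) by (apply sqrt_lt_R0; lra).
  assert (Hss := sqrt_sqrt (cos t - cos al) ltac:(lra)).
  unfold kernel, inv_sqrt_gap.
  set (s := sqrt (cos t - cos al)) in *. set (x := cos t) in *.
  assert (E : / s - (2 * (s / (x - -1)) + (1 - x) / 2) =
              (2 * (1 - x) + 4 * cos al - (1 - x) * s * (x + 1)) / (2 * s * (x + 1))).
  { replace (cos al) with (x - s * s) by lra. field. lra. }
  assert (0 <= (2 * (1 - x) + 4 * cos al - (1 - x) * s * (x + 1)) / (2 * s * (x + 1)));
    [|lra].
  assert (s * (x + 1) <= 2) by nra.
  apply Rmult_le_pos; [nra | left; apply Rinv_0_lt_compat; nra].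
Qed.

Lemma D_neg_at_minus_one : D (-1) < 0.
Proof.
  pose proof cos_alpha_range.
  set (g := fun t => (1 - cos t) / 2 + 2 * kernel (-1) t).
  assert (Hg_int : Riemann_integrable g 0 al).
  { apply integrable_lin; [|apply kernel_integrable; lra].
    apply integrable_of_continuous; [lra|]. intros; continuity_tac; lra. }
  assert (Hg : improper_int_right g 0 al (RI g 0 al)).
  { apply (improper_of_proper _ 3); [lra | auto |]. intros t Ht.
    destruct (kernel_bound (-1) t ltac:(lra) Ht). destruct (COS_bound t).
    assert (/ (cos al - -1) <= 1) by (rewrite <- Rinv_1; apply Rinv_le_contravar; lra).
    unfold g. apply Rabs_le. lra. }
  pose proof (improper_lin _ _ 1 (-1) 0 al _ _ ltac:(lra) HJ Hg) as Hdiff.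
  assert (Hnonneg := improper_nonneg _ 0 al _ ltac:(lra) Hdiff
             ltac:(intros t Ht; pose proof (kernel_minus_one_le t Ht); unfold g; lra)).
  unfold g in Hnonneg. rewrite RI_lin in Hnonneg; [|apply integrable_of_continuous; [lra|];
    intros; continuity_tac; lra | apply kernel_integrable; lra].
  rewrite integral_one_minus_cos in Hnonneg by lra. fold (A (-1)) in Hnonneg.
  assert (sin al < al) by (apply sin_lt_x; lra).
  unfold D. lra.
Qed.

(* From here on beta is the variable: b = cos beta runs decreasingly
   over [-1, cos al) as beta runs over (al, PI]. *)
Lemma D_cos_continuous be0 : al < be0 <= PI -> continuity_pt (fun be => D (cos be)) be0.
Proof.
  intros Hb. destruct (cos_lt_alpha be0 Hb).
  unfold D. apply cont_minus; [apply cont_mult; [apply cont_const|] | apply cont_const].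
  change (continuity_pt (comp A cos) be0).
  apply continuity_pt_comp; [apply cont_cos | apply A_continuous; auto].
Qed.

Lemma D_cos_decreasing be1 be2 : al < be1 < be2 -> be2 <= PI -> D (cos be2) < D (cos be1).
Proof.
  intros H12 H2. assert (A (cos be2) < A (cos be1)) by (apply A_cos_decreasing; auto).
  unfold D. lra.
Qed.

Lemma D_cos_pos_near_alpha : exists delta, 0 < delta /\
  forall be, al < be < al + delta -> be < PI -> 0 < D (cos be).
Proof.
  destruct D_pos_near_cos_alpha as [e0 [He0 Hpos]].
  destruct (continuity_pt_delta cos al e0 (cont_cos al) He0) as [d [Hd Hnear]].
  exists d. split; auto. intros be Hb HbPI.
  destruct (cos_lt_alpha be ltac:(lra)).
  assert (Hc : Rabs (cos be - cos al) < e0) by (apply Hnear; rewrite Rabs_right; lra).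
  apply Rabs_def2 in Hc. apply Hpos. lra.
Qed.

Lemma D_cos_neg_near_pi : exists delta, 0 < delta /\
  forall be, PI - delta < be < PI -> al < be -> D (cos be) < 0.
Proof.
  assert (HP := PI2_1). assert (Hneg := D_neg_at_minus_one).
  destruct (continuity_pt_delta _ PI (- D (-1)) (D_cos_continuous PI ltac:(lra))
              ltac:(lra)) as [d [Hd Hnear]].
  exists d. split; auto. intros be Hb Hal_be.
  assert (Hc : Rabs (D (cos be) - D (cos PI)) < - D (-1))
    by (apply Hnear; rewrite Rabs_left; lra).
  rewrite cos_PI in Hc. apply Rabs_def2 in Hc. lra.
Qed.

(* D o cos vanishes at exactly one point of (al, PI): it is continuous and
   strictly decreasing, positive near al and negative near PI. *)
Lemma D_cos_unique_root : exists bp, al < bp < PI /\ D (cos bp) = 0 /\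
  forall be, al < be < PI -> D (cos be) = 0 -> be = bp.
Proof.
  assert (HP := PI2_1).
  destruct D_cos_pos_near_alpha as [d1 [Hd1 Hpos]].
  destruct D_cos_neg_near_pi as [d2 [Hd2 Hneg]].
  set (x := al + Rmin d1 ((PI - al) / 2) / 2).
  set (y := PI - Rmin d2 ((PI - al) / 2) / 2).
  assert (Hx1 := Rmin_l d1 ((PI - al) / 2)). assert (Hx2 := Rmin_r d1 ((PI - al) / 2)).
  assert (Hy1 := Rmin_l d2 ((PI - al) / 2)). assert (Hy2 := Rmin_r d2 ((PI - al) / 2)).
  assert (Hx3 : 0 < Rmin d1 ((PI - al) / 2)) by (apply Rmin_glb_lt; lra).
  assert (Hy3 : 0 < Rmin d2 ((PI - al) / 2)) by (apply Rmin_glb_lt; lra).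
  assert (Hxy : al < x < y /\ y < PI) by (unfold x, y; lra).
  destruct (IVT_interv (fun be => - D (cos be)) x y) as [z [Hz Hroot]].
  - intros be Hbe. apply continuity_pt_opp, D_cos_continuous; lra.
  - lra.
  - assert (0 < D (cos x)) by (apply Hpos; unfold x; lra). lra.
  - assert (D (cos y) < 0) by (apply Hneg; unfold y; lra). lra.
  - exists z. split; [lra | split; [lra|]].
    intros be Hbe Hzero.
    destruct (total_order_T be z) as [[Hlt|Heq]|Hgt]; auto.
    + assert (D (cos z) < D (cos be)) by (apply D_cos_decreasing; lra). lra.
    + assert (D (cos be) < D (cos z)) by (apply D_cos_decreasing; lra). lra.
Qed.

End Given_J.

End Fixed_angle.

(* I1 and I2 of the statement; I2 is expressed through J and A. *)
Definition I1 (al be : R) : R := RI (integrand1 al be) 0 al.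
Definition I2 (al J be : R) : R := (J - A al (cos be)) / sqrt (cos al - cos be).

Section Fixed_beta.

Variables al be : R.
Hypothesis Hal : 0 < al <= PI / 2.
Hypothesis Hbe : al < be < PI.

Lemma sqrt_gap_beta_pos : 0 < sqrt (cos al - cos be).
Proof. destruct (cos_lt_alpha al Hal be ltac:(lra)). apply sqrt_lt_R0; lra. Qed.

Lemma integrand1_eq t : 0 <= t <= al ->
  integrand1 al be t = / sqrt (cos al - cos be) * kernel al (cos be) t.
Proof.
  intros Ht. destruct (cos_lt_alpha al Hal be ltac:(lra)). destruct (cos_range al Hal t Ht).
  assert (Hs := sqrt_gap_beta_pos).
  unfold integrand1, kernel. rewrite sqrt_div_alt by lra. field. lra.
Qed.

Lemma integrand1_integrable : Riemann_integrable (integrand1 al be) 0 al.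
Proof.
  destruct (cos_lt_alpha al Hal be ltac:(lra)).
  apply (integrable_ext (fun t => / sqrt (cos al - cos be) * kernel al (cos be) t));
    [lra | intros; symmetry; apply integrand1_eq; auto |].
  apply integrable_scal; [lra | apply kernel_integrable; auto].
Qed.

Lemma I1_scaled : sqrt (cos al - cos be) * I1 al be = A al (cos be).
Proof.
  destruct (cos_lt_alpha al Hal be ltac:(lra)). assert (Hs := sqrt_gap_beta_pos).
  unfold I1. rewrite (RI_ext _ (fun t => / sqrt (cos al - cos be) * kernel al (cos be) t));
    [| lra | apply integrand1_integrable | apply integrand1_eq].
  rewrite RI_scal by (try apply kernel_integrable; lra). unfold A. field. lra.
Qed.

Lemma I2_scaled J : sqrt (cos al - cos be) * I2 al J be = J - A al (cos be).
Proof. assert (Hs := sqrt_gap_beta_pos). unfold I2. field. lra. Qed.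

(* I2 is the improper integral of integrand2, which on [0, al) equals
   (cos al - cos be)^(-1/2) * (inv_sqrt_gap - kernel (cos be)). *)
Lemma integrand2_improper J : improper_int_right (inv_sqrt_gap al) 0 al J ->
  improper_int_right (integrand2 al be) 0 al (I2 al J be).
Proof.
  intros HJ. destruct (cos_lt_alpha al Hal be ltac:(lra)). assert (Hs := sqrt_gap_beta_pos).
  pose proof (improper_scal _ (/ sqrt (cos al - cos be)) 0 al _ ltac:(lra)
                (tail_improper al Hal J HJ (cos be) ltac:(lra))) as Htail.
  replace (I2 al J be) with (/ sqrt (cos al - cos be) * (J - A al (cos be)))
    by (unfold I2; field; lra).
  apply (improper_ext _ _ 0 al _ ltac:(lra) Htail). intros t Ht.
  assert (Hp := cos_gt_alpha al Hal t Ht).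
  assert (0 < sqrt (cos t - cos al)) by (apply sqrt_lt_R0; lra).
  rewrite inv_sqrt_gap_sub_kernel by (auto; lra).
  unfold integrand2. rewrite sqrt_div_alt by lra.
  replace (cos t - cos al + (cos al - cos be)) with (cos t - cos be) by ring.
  rewrite <- (sqrt_sqrt (cos al - cos be)) at 2 by lra. field. split; lra.
Qed.

Lemma crossing_sign J :
  (0 < D al J (cos be) <-> I2 al J be < I1 al be) /\
  (D al J (cos be) < 0 <-> I1 al be < I2 al J be) /\
  (D al J (cos be) = 0 <-> I1 al be = I2 al J be).
Proof.
  assert (Hs := sqrt_gap_beta_pos). assert (H1 := I1_scaled). assert (H2 := I2_scaled J).
  assert (E : D al J (cos be) = sqrt (cos al - cos be) * (I1 al be - I2 al J be))
    by (unfold D; lra).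
  rewrite E. split; [|split]; split; intro; nra.
Qed.

End Fixed_beta.

Theorem mainTheorem4 (alpha : R) (Ha : 0 < alpha <= PI / 2) :
  exists I1 I2 : R -> R,
    (* I1 beta, I2 beta are the integrals from the context *)
    (forall beta, alpha < beta < PI ->
       exists pr : Riemann_integrable (integrand1 alpha beta) 0 alpha,
         RiemannInt pr = I1 beta) /\
    (forall beta, alpha < beta < PI ->
       improper_int_right (integrand2 alpha beta) 0 alpha (I2 beta)) /\
    (* (cos alpha - cos beta)^(1/2) I1(beta) strictly decreasing *)
    (forall b1 b2, alpha < b1 -> b1 < b2 -> b2 < PI ->
       sqrt (cos alpha - cos b2) * I1 b2 < sqrt (cos alpha - cos b1) * I1 b1) /\
    (* (cos alpha - cos beta)^(1/2) I2(beta) strictly increasing *)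
    (forall b1 b2, alpha < b1 -> b1 < b2 -> b2 < PI ->
       sqrt (cos alpha - cos b1) * I2 b1 < sqrt (cos alpha - cos b2) * I2 b2) /\
    (* I1 > I2 for beta close to alpha *)
    (exists delta, 0 < delta /\
       forall beta, alpha < beta < alpha + delta -> beta < PI -> I2 beta < I1 beta) /\
    (* I1 < I2 for beta close to pi *)
    (exists delta, 0 < delta /\
       forall beta, PI - delta < beta < PI -> alpha < beta -> I1 beta < I2 beta) /\
    (* unique crossing point *)
    (exists betap, alpha < betap < PI /\ I1 betap = I2 betap /\
       forall beta, alpha < beta < PI -> I1 beta = I2 beta -> beta = betap).
Proof.
  destruct (J_exists alpha Ha) as [J HJ].
  exists (I1 alpha), (I2 alpha J).
  split; [|split; [|split; [|split; [|split; [|split]]]]].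
  - intros be Hbe. exists (integrand1_integrable alpha be Ha Hbe). apply RI_eq.
  - intros be Hbe. apply integrand2_improper; auto.
  - intros b1 b2 H1 H2 H3. rewrite !I1_scaled by (auto; lra).
    apply A_cos_decreasing; auto; lra.
  - intros b1 b2 H1 H2 H3. rewrite !I2_scaled by (auto; lra).
    assert (A alpha (cos b2) < A alpha (cos b1)) by (apply A_cos_decreasing; auto; lra).
    lra.
  - destruct (D_cos_pos_near_alpha alpha Ha J HJ) as [d [Hd Hpos]].
    exists d. split; auto. intros be Hbe HbPI.
    apply (crossing_sign alpha be Ha ltac:(lra)), Hpos; auto.
  - destruct (D_cos_neg_near_pi alpha Ha J HJ) as [d [Hd Hneg]].
    exists d. split; auto. intros be Hbe Hal_be.
    apply (crossing_sign alpha be Ha ltac:(lra)), Hneg; auto.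
  - destruct (D_cos_unique_root alpha Ha J HJ) as [bp [Hbp [Hroot Huniq]]].
    exists bp. split; [auto | split].
    + apply (crossing_sign alpha bp Ha Hbp); auto.
    + intros be Hbe Heq. apply Huniq; auto. apply (crossing_sign alpha be Ha Hbe); auto.
Qed.
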